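(* Let $g:[0,1]^n\rightarrow\mathbb{R}$ be twice continuously differentiable (on an open neighborhood of $[0,1]^n$), and for $\boldsymbol{w}\in[0,1]^n$ let $H(\boldsymbol{w})$ denote the Hessian of $g$ at $\boldsymbol{w}$. Let $$K := \max_{\boldsymbol{w}\in[0,1]^n,\ i\in[n]} \Big|\sum_{j\neq i} H_{ij}(\boldsymbol{w})\Big|.$$ Then for every $i\in[n]$, $$\left|\int_{0}^1 \frac{\partial g}{\partial w_i}(t\mathbf{1})\, dt - \big(g(\mathbf{1}_i) - g(\mathbf{0})\big)\right| \le \frac{K}{2},$$ where $\mathbf{1}\in\mathbb{R}^n$ is the all-ones vector, $\mathbf{0}$ is the zero vector, and $\mathbf{1}_i$ is the $i$-th standard basis vector of $\mathbb{R}^n$.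
   Context: $[n]=\{1,\dots,n\}$. The quantity $\int_0^1 \frac{\partial g}{\partial w_i}(t\mathbf{1})\,dt$ is the (path) integrated-gradients attribution of feature $i$ along the straight line from $\mathbf{0}$ to $\mathbf{1}$, and $g(\mathbf{1}_i)-g(\mathbf{0})$ is the marginal gain of feature $i$ at the empty set for the set function $G(S)=g(\mathbf{1}_S)$, where $\mathbf{1}_S\in\{0,1\}^n$ is the indicator vector of $S\subseteq[n]$. *)

From HB Require Import structures.
From mathcomp Require Import all_boot all_order all_algebra.
From mathcomp Require Import all_classical all_reals all_analysis.
Set Implicit Arguments. Unset Strict Implicit. Unset Printing Implicit Defensive.
Import Order.TTheory GRing.Theory Num.Theory.
Import numFieldNormedType.Exports.
Local Open Scope classical_set_scope.
Local Open Scope ring_scope.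

Definition basis_vec (R : realType) (n : nat) (i : 'I_n) : 'rV[R]_n :=
  delta_mx 0 i.

Definition ones (R : realType) (n : nat) : 'rV[R]_n := const_mx 1.

Definition partial (R : realType) (n : nat) (i : 'I_n)
  (f : 'rV[R]_n -> R) : 'rV[R]_n -> R :=
  fun w => 'D_(@basis_vec R n i) f w.

Definition hessian (R : realType) (n : nat) (f : 'rV[R]_n -> R)
  (i j : 'I_n) (w : 'rV[R]_n) : R :=
  partial j (partial i f) w.

Definition unit_cube (R : realType) (n : nat) : set 'rV[R]_n :=
  [set w | forall k : 'I_n, 0 <= w 0 k <= 1].

Definition C2_on (R : realType) (n : nat) (U : set 'rV[R]_n)
  (f : 'rV[R]_n -> R) : Prop :=
  [/\ forall w, U w -> forall i : 'I_n, derivable f w (@basis_vec R n i),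
      forall w, U w -> forall i j : 'I_n,
        derivable (partial i f) w (@basis_vec R n j) &
      forall (i j : 'I_n) w, U w -> {for w, continuous (hessian f i j)}].

Definition Kconst (R : realType) (n : nat) (f : 'rV[R]_n -> R) : R :=
  sup [set x : R | exists (w : 'rV[R]_n) (i : 'I_n), @unit_cube R n w /\
         x = `| \sum_(j < n | j != i) hessian f i j w | ].

From HB Require Import structures.
From mathcomp Require Import all_boot all_order all_algebra.
From mathcomp Require Import all_classical all_reals all_analysis.
From mathcomp Require Import ring.
Import Order.TTheory GRing.Theory Num.Theory.
Import numFieldNormedType.Exports.
Local Open Scope classical_set_scope.
Local Open Scope ring_scope.

(* Write d_i g (t 1) - d_i g (t e_i) as the increment of f := d_i g along the
   segment from t e_i to t 1.  Its direction t (1 - e_i) has no i-th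
   component, so by the chain rule (valid since the partials of f are
   continuous) the derivative of f along it is t * sum_(j != i) H_ij at a
   point of the cube, and the mean value theorem bounds the increment by K t.
   The fundamental theorem of calculus gives
   int_0^1 d_i g (t e_i) dt = g e_i - g 0, and int_0^1 K t dt = K / 2. *)

Section RealLemmas.
Context {R : realType}.

Lemma continuous_sum (T : topologicalType) (I : finType) (P : pred I)
    (F : I -> T -> R) (x : T) :
  (forall j, {for x, continuous (F j)}) ->
  {for x, continuous (fun w => \sum_(j | P j) F j w)}.
Proof.
move=> cF; rewrite -fct_sumE.
apply: (big_ind (fun h : T -> R => {for x, continuous h})) => //.
- exact: cvg_cst.
- by move=> h1 h2; apply: continuousD.
Qed.

Lemma derivable1_continuous (h : R -> R) (t : R) :
  derivable h t 1 -> {for t, continuous h}.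
Proof. by move=> /derivable1_diffP/differentiable_continuous. Qed.

Lemma mvt_increment_le (psi dpsi : R -> R) (a b L e : R) : a <= b ->
  (forall x, a <= x <= b -> is_derive x 1 psi (dpsi x) /\ `|dpsi x - L| <= e) ->
  `|psi b - psi a - (b - a) * L| <= e * (b - a).
Proof.
move=> ab H.
have [c] : exists2 c, c \in `[a, b] & psi b - psi a = dpsi c * (b - a).
  apply: MVT_segment => //.
    move=> x; rewrite in_itv /= => /andP[ax xb].
    by have /H[] : a <= x <= b by rewrite !ltW.
  apply: derivable_within_continuous => x; rewrite in_itv /= => /H[dx _].
  exact: ex_derive.
rewrite in_itv /= => /H[_ dc] ->.
by rewrite [_ * L]mulrC -mulrBl normrM [`|b - a|]ger0_norm ?subr_ge0 // ler_wpM2r ?subr_ge0.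
Qed.

Lemma continuous_within_segment (h : R -> R) (a b : R) :
  (forall x, a <= x <= b -> {for x, continuous h}) ->
  {within `[a, b], continuous h}.
Proof.
by move=> ch; apply: continuous_in_subspaceT => x; rewrite inE /= in_itv => /ch.
Qed.

Lemma continuous_segment_integrable (h : R -> R) (a b : R) :
  (forall x, a <= x <= b -> {for x, continuous h}) ->
  lebesgue_measure.-integrable `[a, b] (EFin \o h).
Proof.
move=> ch; apply: continuous_compact_integrable; first exact: segment_compact.
exact: continuous_within_segment.
Qed.

Lemma Rintegral_is_derive (F f : R -> R) (a b : R) : a < b ->
  (forall x, a <= x <= b -> is_derive x 1 F (f x)) ->
  (forall x, a <= x <= b -> {for x, continuous f}) ->
  Rintegral lebesgue_measure `[a, b] f = F b - F a.
Proof.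
move=> ab dF /continuous_within_segment cf.
have cF x : a <= x <= b -> {for x, continuous F}.
  by move/dF => dx; apply: derivable1_continuous.
rewrite /Rintegral (continuous_FTC2 (F := F) ab cf) //.
- split.
  + by move=> x; rewrite in_itv => /andP[ax xb]; case: (dF x); rewrite ?ltW.
  + by apply/cvg_at_right_filter/cF; rewrite lexx ltW.
  + by apply/cvg_at_left_filter/cF; rewrite lexx ltW.
- move=> x; rewrite in_itv => /andP[ax xb].
  by rewrite derive1E; case: (dF x); rewrite ?ltW.
Qed.

Lemma Rintegral01_scale_id (c : R) :
  Rintegral lebesgue_measure `[0, 1] (fun t => c * t) = c / 2.
Proof.
have dF (x : R) : is_derive x 1 (fun t : R => c / 2 * (t * t)) (c * x).
  by apply: is_derive_eq; rewrite /GRing.scale /=; field.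
rewrite (@Rintegral_is_derive (fun t => c / 2 * (t * t))) ?ltr01 //.
  by rewrite !mulr1 !mulr0 subr0.
by move=> x _; apply: derivable1_continuous; case: (dF x).
Qed.

End RealLemmas.

Section Lines.
Context {R : realType} {n : nat}.
Implicit Types (f : 'rV[R]_n -> R) (p d : 'rV[R]_n).

Lemma is_derive_line f p d (s : R) : derivable f (p + s *: d) d ->
  is_derive s 1 (fun t => f (p + t *: d)) ('D_d f (p + s *: d)).
Proof.
have quot : (fun h : R => h^-1 *: ((f \o shift (p + s *: d)) (h *: d) - f (p + s *: d))) =
    (fun h : R => h^-1 *: (((fun t => f (p + t *: d)) \o shift s) (h *: 1) - f (p + s *: d))).
  apply/funext => h /=; congr (_ *: (f _ - _)).
  by rewrite [h *: (1 : R)]mulr1 scalerDl addrCA addrA.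
move=> df; split; first by move: df; rewrite /derivable quot.
by rewrite /derive -quot.
Qed.

Lemma continuous_line f p d (s : R) : derivable f (p + s *: d) d ->
  {for s, continuous (fun t : R => f (p + t *: d))}.
Proof. by move=> /is_derive_line[dh _]; apply: derivable1_continuous. Qed.

Lemma line_increment_le f p d (a L e : R) :
  (forall s, `|s| <= `|a| ->
     derivable f (p + s *: d) d /\ `|'D_d f (p + s *: d) - L| <= e) ->
  `|f (p + a *: d) - f p - a * L| <= e * `|a|.
Proof.
move=> H; set psi := fun t : R => f (p + t *: d).
have psi0 : f p = psi 0 by rewrite /psi scale0r addr0.
have dpsi (s : R) : `|s| <= `|a| ->
    is_derive s 1 psi ('D_d f (p + s *: d)) /\ `|'D_d f (p + s *: d) - L| <= e.
  by move=> /H[/is_derive_line].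
rewrite psi0 -/(psi a); have [a0|a0] := leP 0 a.
  rewrite (ger0_norm a0) -[a in a * L]subr0 -[a in e * a]subr0.
  apply: mvt_increment_le => // s /andP[s0 sa]; apply: dpsi.
  by rewrite !ger0_norm // (le_trans s0).
have -> : psi a - psi 0 - a * L = - (psi 0 - psi a - (0 - a) * L) by ring.
have -> : `|a| = 0 - a by rewrite sub0r ltr0_norm.
rewrite normrN; apply: mvt_increment_le; first exact: ltW.
move=> s /andP[a_s s0]; apply: dpsi.
by rewrite ler0_norm // ltr0_norm // lerN2.
Qed.

Lemma ray_line f d : (fun t : R => f (t *: d)) = (fun t => f (0 + t *: d)).
Proof. by apply/funext => t; rewrite add0r. Qed.

End Lines.

Section ContinuousPartials.
Context {R : realType} {n : nat}.
Local Notation e_ := (@basis_vec R n).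
Implicit Types (f : 'rV[R]_n -> R) (v w : 'rV[R]_n).

Definition row_prefix v (k : nat) : 'rV[R]_n :=
  \row_j (if (j < k)%N then v 0 j else 0).

Lemma row_prefix0 v : row_prefix v 0 = 0.
Proof. by apply/rowP => j; rewrite !mxE. Qed.

Lemma row_prefix_full v : row_prefix v n = v.
Proof. by apply/rowP => j; rewrite !mxE ltn_ord. Qed.

Lemma row_prefixS v (k : 'I_n) :
  row_prefix v k.+1 = row_prefix v k + v 0 k *: e_ k.
Proof.
apply/rowP => j; rewrite !mxE /= ltnS leq_eqVlt.
case: (eqVneq j k) => [->|jk]; first by rewrite eqxx ltnn mulr1 add0r.
by move: (jk); rewrite -val_eqE => /negbTE ->; rewrite mulr0 addr0.
Qed.

Lemma row_prefix_step_coord v (k j : 'I_n) (s : R) : `|s| <= `|v 0 k| ->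
  `|(row_prefix v k + s *: e_ k) 0 j| <= `|v 0 j|.
Proof.
rewrite !mxE /=; case: eqVneq => [->|_] sk; first by rewrite ltnn add0r mulr1.
by rewrite mulr0 addr0; case: ifP; rewrite ?normr0.
Qed.

Lemma ball_rowD w (y : 'rV[R]_n) (r : R) :
  0 < r -> (forall j, `|y 0 j| < r) -> ball w r (w + y).
Proof.
move=> r0 hy; split => // i j.
by rewrite /ball /= mxE ord1 opprD addrA subrr sub0r normrN.
Qed.

(* Telescope from w to w + v one coordinate at a time: each step moves along a
   single axis, where the one-variable mean value theorem applies. *)
Lemma increment_le_partials f w v (r e : R) : 0 < r ->
  (forall x, ball w r x -> forall j,
     derivable f x (e_ j) /\ `|partial j f x - partial j f w| <= e) ->
  (forall j, `|v 0 j| < r) ->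
  `|f (w + v) - f w - \sum_j v 0 j * partial j f w| <= e * \sum_j `|v 0 j|.
Proof.
move=> r0 near_w small_v.
have -> : f (w + v) - f w - \sum_j v 0 j * partial j f w = \sum_(k < n)
    (f (w + row_prefix v k.+1) - f (w + row_prefix v k) - v 0 k * partial k f w).
  rewrite sumrB -(big_mkord xpredT (fun k => f (w + row_prefix v k.+1) - f (w + row_prefix v k))).
  by rewrite telescope_sumr // row_prefix0 row_prefix_full addr0.
rewrite mulr_sumr; apply: (le_trans (ler_norm_sum _ _ _)); apply: ler_sum => k _.
rewrite row_prefixS addrA.
apply: line_increment_le => s sk; apply: near_w.
rewrite -addrA; apply: ball_rowD => // j.
exact: le_lt_trans (row_prefix_step_coord _ _ _ _ sk) (small_v j).
Qed.

Lemma near_partials_close f w (e : R) : 0 < e ->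
  (\forall x \near w, forall j, derivable f x (e_ j)) ->
  (forall j, {for w, continuous (partial j f)}) ->
  \forall x \near w, forall j,
    derivable f x (e_ j) /\ `|partial j f x - partial j f w| <= e.
Proof.
move=> e0 df cf; apply: (@filter_forall _ 'I_n (fun j x =>
  derivable f x (e_ j) /\ `|partial j f x - partial j f w| <= e) (nbhs w) _) => j.
near=> x; split.
  by near: x; apply: filterS df => x /(_ j).
by rewrite distrC; near: x; move/cvgrPdist_le: (cf j); apply.
Unshelve. all: by end_near.
Qed.

Lemma is_derive_partials f w v :
  (\forall x \near w, forall j, derivable f x (e_ j)) ->
  (forall j, {for w, continuous (partial j f)}) ->
  is_derive w v f (\sum_j v 0 j * partial j f w).
Proof.
move=> df cf; set L := \sum_j _.
set S := \sum_k `|v 0 k| + 1.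
have S0 : 0 < S by rewrite ltr_pwDr // sumr_ge0.
suff cvL : (fun h : R => h^-1 *: ((f \o shift w) (h *: v) - f w)) @ 0^' --> L.
  have dv : derivable f w v by apply/cvg_ex; exists L.
  by split => //; apply: cvg_lim.
apply/cvgrPdist_le => eps eps0.
have eS0 : 0 < eps / S by rewrite divr_gt0.
have /nbhs_ballP[r /= r0 near_w] := near_partials_close f w _ eS0 df cf.
near=> h.
have h0 : h != 0 by near: h; exact: nbhs_dnbhs_neq.
have hr : `|h| < r / S by near: h; apply: dnbhs0_lt; rewrite divr_gt0.
have vS j : `|v 0 j| <= S.
  by rewrite /S (bigD1 j) //= -addrA lerDl addr_ge0 // sumr_ge0.
have hv j : `|(h *: v) 0 j| < r.
  rewrite mxE normrM (le_lt_trans (y := `|h| * S)) ?ler_wpM2l //.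
  by rewrite -ltr_pdivlMr.
have := @increment_le_partials f w (h *: v) r _ r0 near_w hv.
have -> : \sum_j (h *: v) 0 j * partial j f w = h * L.
  by rewrite /L mulr_sumr; apply: eq_bigr => j _; rewrite mxE mulrA.
under eq_bigr do rewrite mxE normrM.
rewrite -mulr_sumr [h *: v + w]addrC => incr.
have -> : L - h^-1 *: (f (w + h *: v) - f w) = - h^-1 * (f (w + h *: v) - f w - h * L).
  by rewrite /GRing.scale /=; field.
rewrite normrM normrN normfV ler_pdivrMl ?normr_gt0 //.
apply: (le_trans incr); rewrite mulrCA ler_wpM2l // mulrAC ler_pdivrMr //.
by rewrite ler_wpM2l ?ltW // /S ltrDl.
Unshelve. all: by end_near.
Qed.

End ContinuousPartials.

Section UnitCube.
Context {R : realType} {n : nat}.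
Local Notation cube := (@unit_cube R n).
Implicit Types v : 'rV[R]_n.
Local Notation e_ := (@basis_vec R n).

Lemma unit_cube_compact : compact cube.
Proof.
have -> : cube = [set v : 'rV[R]_n | forall k, `[(0 : R), 1]%classic (v 0 k)].
  by apply/funext => w; apply/propext; split => cw k; have := cw k; rewrite /= in_itv.
exact: (rV_compact (fun=> @segment_compact R 0 1)).
Qed.

Lemma unit_cube_scale v (t : R) : 0 <= t <= 1 -> cube v -> cube (t *: v).
Proof.
move=> /andP[t0 t1] cv k; have /andP[v0 v1] := cv k.
by rewrite mxE mulr_ge0 //= mulr_ile1.
Qed.

Lemma unit_cube_basis (i : 'I_n) : cube (e_ i).
Proof. by move=> k; rewrite !mxE /=; case: (k == i); rewrite ?lexx ?ler01. Qed.

Lemma unit_cube_ones : cube (ones R n).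
Proof. by move=> k; rewrite mxE lexx ler01. Qed.

Lemma unit_cube_basis_ones_segment (i : 'I_n) (s : R) : 0 <= s <= 1 ->
  cube (e_ i + s *: (ones R n - e_ i)).
Proof.
move=> s01 k; rewrite !mxE /=.
by case: (k == i); rewrite ?subrr ?mulr0 ?addr0 ?lexx ?ler01 ?subr0 ?mulr1 ?add0r.
Qed.

Lemma norm_hessian_offdiag_le_Kconst (g : 'rV[R]_n -> R) :
  (forall i j w, cube w -> {for w, continuous (hessian g i j)}) ->
  forall i w, cube w -> `|\sum_(j < n | j != i) hessian g i j w| <= Kconst g.
Proof.
move=> cH i w cw.
pose phi (k : 'I_n) w := `|\sum_(j < n | j != k) hessian g k j w|.
have cphi k : compact (phi k @` cube).
  apply: continuous_compact unit_cube_compact.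
  apply: continuous_in_subspaceT => x; rewrite inE => cx.
  have cs : {for x, continuous (fun w => \sum_(j < n | j != k) hessian g k j w)}.
    by apply: continuous_sum => j; exact: cH.
  exact: cvg_norm cs.
(* Kconst is a sup: bound its set by a finite union of images of the compact cube. *)
have [_ [M ubM]] : has_sup (\big[setU/set0]_(k <- index_enum 'I_n) phi k @` cube).
  apply: compact_has_sup; last exact: bigsetU_compact.
  by exists (phi i w); rewrite -bigcup_seq; exists i; [rewrite /= mem_index_enum | exists w].
apply: ub_le_sup; last by exists w, i.
exists M => _ [x [k [cx ->]]]; apply: ubM.
by rewrite -bigcup_seq; exists k; [rewrite /= mem_index_enum | exists x].
Qed.

End UnitCube.

Section IntegratedGradient.
Context {R : realType} {n : nat} {g : 'rV[R]_n -> R} {U : set 'rV[R]_n}.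
Hypotheses (oU : open U) (cubeU : @unit_cube R n `<=` U) (g2 : C2_on U g).
Variable i : 'I_n.
Local Notation e_ := (@basis_vec R n).
Local Notation f := (partial i g).

Lemma is_derive_partial w v : U w ->
  is_derive w v f (\sum_j v 0 j * hessian g i j w).
Proof.
case: g2 => _ dpg cH Uw; apply: is_derive_partials => [|j]; last exact: cH.
by apply: filterS (open_nbhs_nbhs (conj oU Uw)) => x Ux j; apply: dpg.
Qed.

Lemma continuous_partial_ray v (t : R) : unit_cube v -> 0 <= t <= 1 ->
  {for t, continuous (fun s : R => f (s *: v))}.
Proof.
move=> cv t01; have /cubeU Utv := unit_cube_scale _ _ t01 cv.
rewrite ray_line; apply: continuous_line.
by rewrite add0r; case: (is_derive_partial _ v Utv).
Qed.

Lemma norm_partial_ones_sub_basis_le (t : R) : 0 <= t <= 1 ->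
  `|f (t *: ones R n) - f (t *: e_ i)| <= Kconst g * t.
Proof.
case: (g2) => _ _ cH t01; set d := t *: (ones R n - e_ i).
have pt s : t *: e_ i + s *: d = t *: (e_ i + s *: (ones R n - e_ i)).
  by rewrite /d scalerA mulrC -scalerA -scalerDr.
have -> : t *: ones R n = t *: e_ i + 1 *: d by rewrite pt scale1r addrC subrK.
have := @mvt_increment_le _ (fun s => f (t *: e_ i + s *: d))
  (fun s => 'D_d f (t *: e_ i + s *: d)) 0 1 0 (Kconst g * t) ler01.
rewrite /= scale0r addr0 !subr0 mulr0 subr0 mulr1; apply => s s01.
have cube_s : unit_cube (t *: e_ i + s *: d).
  by rewrite pt; apply: unit_cube_scale => //; exact: unit_cube_basis_ones_segment.
have [dd Dd] := is_derive_partial _ d (cubeU _ cube_s).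
split; first exact: is_derive_line.
rewrite Dd.
(* d has no i-th component *)
have -> : \sum_j d 0 j * hessian g i j (t *: e_ i + s *: d) =
    t * \sum_(j < n | j != i) hessian g i j (t *: e_ i + s *: d).
  rewrite mulr_sumr [RHS]big_mkcond; apply: eq_bigr => j _.
  rewrite /d !mxE /=; case: (eqVneq j i) => [->|_] /=.
    by rewrite subrr mulr0 mul0r.
  by rewrite subr0 mulr1.
have t0 : 0 <= t by case/andP: t01.
rewrite subr0 normrM ger0_norm // mulrC ler_wpM2r //.
by apply: (norm_hessian_offdiag_le_Kconst g) cube_s => k j w /cubeU; exact: cH.
Qed.

Lemma Rintegral_partial_basis :
  Rintegral lebesgue_measure `[0, 1] (fun t => f (t *: e_ i)) = g (e_ i) - g 0.
Proof.
case: (g2) => dg _ _.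
have := @Rintegral_is_derive _ (fun t => g (t *: e_ i)) (fun t => f (t *: e_ i)) 0 1 ltr01.
rewrite scale1r scale0r; apply.
- move=> t t01; rewrite ray_line -[t *: e_ i]add0r; apply: is_derive_line.
  apply: dg; rewrite add0r; apply/cubeU; apply: unit_cube_scale => //; exact: unit_cube_basis.
- by move=> t; apply: continuous_partial_ray; exact: unit_cube_basis.
Qed.

End IntegratedGradient.

Theorem lemma1 (R : realType) (n : nat) (g : 'rV[R]_n -> R)
  (U : set 'rV[R]_n) (hU : open U) (hcube : @unit_cube R n `<=` U)
  (hg : C2_on U g) (i : 'I_n) :
  `| Rintegral lebesgue_measure `[0%R, 1%R]
       (fun t : R => partial i g (t *: @ones R n))
     - (g (@basis_vec R n i) - g 0) | <= Kconst g / 2.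
Proof.
have cray := continuous_partial_ray hU hcube hg i.
have cgap t : 0 <= t <= 1 -> {for t, continuous (fun s : R =>
    partial i g (s *: ones R n) - partial i g (s *: @basis_vec R n i))}.
  by move=> t01; apply: continuousB; apply: cray t01;
    [exact: unit_cube_ones | exact: unit_cube_basis].
rewrite -(Rintegral_partial_basis hU hcube hg) -RintegralB //; first last.
- by apply: continuous_segment_integrable => t; apply: cray; exact: unit_cube_basis.
- by apply: continuous_segment_integrable => t; apply: cray; exact: unit_cube_ones.
rewrite -Rintegral01_scale_id.
apply: le_trans (le_normr_Rintegral _ _) _ => //.
  exact: continuous_segment_integrable.
apply: le_Rintegral => //.
- by apply: continuous_segment_integrable => t /cgap; apply: cvg_norm.
- apply: continuous_segment_integrable => t _.
  exact: continuousM (cvg_cst _) cvg_id.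
- by move=> t; rewrite /= in_itv /= => t01; exact: norm_partial_ones_sub_basis_le hU hcube hg i t t01.
Qed.
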